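(* Let $G=(V,E)$ be a forest with $V=\{1,\dots,n\}$ and adjacency matrix $A$. Then $$\beta(G)=\min\{\mathbf{e}^\top x \mid x \text{ solves } \mathrm{LCP}(A+I,-\mathbf{e})\},$$ where $I$ is the $n\times n$ identity matrix and $\mathbf{e}$ is the all-ones vector in $\mathbb{R}^n$.
   Context: A forest is a simple graph (finite, undirected, no loops or multiple edges) with no cycles, i.e. a disjoint union of trees. Its adjacency matrix $A=[a_{ij}]$ has $a_{ij}=1$ iff $\{i,j\}\in E$. An independent set is maximal if it is not properly contained in another independent set; $\beta(G)$ denotes the minimum cardinality of a maximal independent set of $G$ (the independent domination number). A vector $x\in\mathbb{R}^n$ solves $\mathrm{LCP}(M,q)$ if $x\geq 0$, $Mx+q\geq 0$ and $x^\top(Mx+q)=0$. *)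

From HB Require Import structures.
From mathcomp Require Import all_boot all_order all_algebra.
From mathcomp Require Import reals.
Set Implicit Arguments. Unset Strict Implicit. Unset Printing Implicit Defensive.
Import Order.TTheory GRing.Theory Num.Theory.

Definition simple_graph (n : nat) (e : rel 'I_n) : Prop :=
  symmetric e /\ irreflexive e.

Definition has_cycle (n : nat) (e : rel 'I_n) : Prop :=
  exists c : seq 'I_n, (3 <= size c)%N /\ cycle e c /\ uniq c.

Definition forest (n : nat) (e : rel 'I_n) : Prop :=
  simple_graph e /\ ~ has_cycle e.

Definition independent (n : nat) (e : rel 'I_n) (S : {set 'I_n}) : bool :=
  [forall i in S, forall j in S, ~~ e i j].

Definition maximal_independent (n : nat) (e : rel 'I_n) (S : {set 'I_n}) : bool :=
  independent e S &&
  [forall T : {set 'I_n}, (S \proper T) ==> ~~ independent e T].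

Definition beta (n : nat) (e : rel 'I_n) : nat :=
  \big[minn/n]_(S : {set 'I_n} | maximal_independent e S) #|S|.

Local Open Scope ring_scope.

Definition adjacency (R : realType) (n : nat) (e : rel 'I_n) : 'M[R]_n :=
  \matrix_(i, j) (e i j)%:R.

Definition ones (R : realType) (n : nat) : 'cV[R]_n := const_mx 1.

Definition solves_LCP (R : realType) (n : nat) (M : 'M[R]_n) (q x : 'cV[R]_n) : Prop :=
  (forall i, 0 <= x i 0) /\
  (forall i, 0 <= (M *m x + q) i 0) /\
  (x^T *m (M *m x + q)) 0 0 = 0.

From mathcomp Require Import all_boot all_order all_algebra.
From mathcomp Require Import reals lra.
Set Implicit Arguments. Unset Strict Implicit. Unset Printing Implicit Defensive.
Import Order.TTheory GRing.Theory Num.Theory.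

(* A vector x solves LCP(A + I, -e) iff x >= 0, every closed-neighbourhood sum
   x_i + sum_{j ~ i} x_j is at least 1, with equality wherever x_i > 0.  The
   indicator of an independent dominating (= maximal independent) set is such a
   solution.  Conversely, let x solve it on an induced subforest W and let l be a
   leaf of W with neighbour p.  Then l or p is a vertex v whose positively
   weighted neighbours have all their neighbours in N[v]; hence x still solves
   the problem on W \ N[v], while the weight removed is the closed sum at v,
   which is at least 1.  Putting v into the set and recursing yields an
   independent dominating set of size at most e^T x. *)

Section Graph.
Variables (n : nat) (e : rel 'I_n).
Hypotheses (e_sym : symmetric e) (e_irr : irreflexive e) (e_acyclic : ~ has_cycle e).

Definition dominating (W S : {set 'I_n}) : Prop :=
  forall i, i \in W -> (i \in S) || [exists j in S, e i j].

Lemma maximal_independent_dominating S :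
  maximal_independent e S -> dominating setT S.
Proof.
case/andP=> indS /forallP maxS i _; case: (boolP (i \in S)) => //= iNS.
have ltSiS : S \proper i |: S by rewrite properUr // sub1set.
move: (implyP (maxS _) ltSiS); apply: contraTT => /exists_inPn iNadj.
rewrite negbK; apply/forall_inP => a aS; apply/forall_inP => b bS.
move: aS bS; rewrite !in_setU1.
case/predU1P=> [-> | aS] /predU1P [-> | bS]; first by rewrite e_irr.
- exact: iNadj.
- by rewrite e_sym; apply: iNadj.
- by move/forall_inP: indS => /(_ a aS) /forall_inP; apply.
Qed.

Lemma independent_dominating_maximal S :
  independent e S -> dominating setT S -> maximal_independent e S.
Proof.
move=> indS domS; rewrite /maximal_independent indS /=.
apply/forallP => T; apply/implyP => /properP [/subsetP sST [i iT iNS]].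
have /exists_inP [j jS eij] : [exists j in S, e i j].
  by have := domS i (in_setT i); rewrite (negbTE iNS).
by apply/negP => /forall_inP /(_ i iT) /forall_inP /(_ j (sST j jS)); rewrite eij.
Qed.

Lemma beta_le S : maximal_independent e S -> (beta e <= #|S|)%N.
Proof.
by move=> maxS; rewrite /beta -minEnat; apply: (bigmin_le_cond n (fun T : {set _} => #|T|)).
Qed.

Lemma beta_attained : exists2 S, maximal_independent e S & beta e = #|S|.
Proof.
have ind0 : independent e set0 by apply/forall_inP => i; rewrite inE.
have [S0 /maxsetP [indS0 supS0]] := ex_maxset (ex_intro (independent e) _ ind0).
have maxS0 : maximal_independent e S0.
  rewrite /maximal_independent indS0; apply/forallP => T; apply/implyP => ltS0T.
  apply/negP => indT; have := supS0 T indT (proper_sub ltS0T).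
  by move: ltS0T => /[swap] ->; rewrite properxx.
have [S maxS minS] := arg_minnP (fun S : {set 'I_n} => #|S|) maxS0.
exists S => //; apply/anti_leq; rewrite beta_le //= /beta -minEnat -leEnat.
apply: le_bigmin => [|T /minS //].
by rewrite leEnat -[n in (_ <= n)%N]card_ord max_card.
Qed.

Definition closed_nbhd (W : {set 'I_n}) p := [set j in W | (j == p) || e p j].

Lemma independent_dominating_setU1 (W S : {set 'I_n}) p :
  p \in W -> S \subset W :\: closed_nbhd W p -> independent e S ->
  dominating (W :\: closed_nbhd W p) S ->
  [/\ p |: S \subset W, independent e (p |: S) & dominating W (p |: S)].
Proof.
move=> pW /subsetP sSW' indS domS; set N := closed_nbhd W p.
have pNadj j : j \in S -> ~~ e p j.
  by move/sSW'/setDP => [jW]; rewrite inE jW negb_or => /andP [_].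
split.
- by apply/subsetP => i /setU1P [-> // | /sSW' /setDP []].
- apply/forall_inP => i /setU1P [-> | iS]; apply/forall_inP => j /setU1P [-> | jS].
  + by rewrite e_irr.
  + exact: pNadj.
  + by rewrite e_sym pNadj.
  + by move/forall_inP: indS => /(_ i iS) /forall_inP; apply.
- move=> i iW; case: (boolP (i \in N)) => [| iNN].
    rewrite inE iW /= => /orP [/eqP -> | epi]; first by rewrite setU11.
    by apply/orP; right; apply/exists_inP; exists p; rewrite ?setU11 // e_sym.
  have /domS : i \in W :\: N by rewrite in_setD iNN iW.
  case/orP => [iS | /exists_inP [j jS eij]]; first by rewrite in_setU1 iS orbT.
  by apply/orP; right; apply/exists_inP; exists j; rewrite // in_setU1 jS orbT.
Qed.

Lemma acyclic_path_fresh x t u :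
  path e x t -> uniq (x :: t) -> e x u -> u != head x t -> u \notin x :: t.
Proof.
move=> pxt uxt exu uNh; rewrite in_cons negb_or.
have -> /= : u != x by apply: contraTneq exu => ->; rewrite e_irr.
case: t pxt uxt uNh => [//|w t] pxt uxt /= uNw.
rewrite in_cons (negbTE uNw) /=; apply/negP => ut; move: pxt uxt.
case/splitPr: ut => t1 t2.
have -> : w :: t1 ++ u :: t2 = rcons (w :: t1) u ++ t2 by rewrite cat_rcons.
rewrite -cat_cons cat_path cat_uniq => /andP [pxwu _] /andP [uxwu _].
apply: e_acyclic; exists (x :: rcons (w :: t1) u); split => //.
  by rewrite /= size_rcons.
by rewrite /cycle rcons_path pxwu last_rcons e_sym.
Qed.

Lemma acyclic_long_path (W : {set 'I_n}) :
  (forall x, x \in W -> exists u v, [/\ u \in W, v \in W, e x u, e x v & u != v]) ->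
  W != set0 -> forall k, exists x t, [/\ size t = k, uniq (x :: t), x \in W & path e x t].
Proof.
move=> branching /set0Pn [x0 x0W]; elim=> [|k [x [t [st uxt xW pxt]]]].
  by exists x0, [::].
have [u [v [uW vW exu exv uNv]]] := branching x xW.
pose y := if u == head x t then v else u.
have yW : y \in W by rewrite /y; case: ifP.
have exy : e x y by rewrite /y; case: ifP.
have yNh : y != head x t.
  by rewrite /y; case: ifP => [/eqP <- | /negbT //]; rewrite eq_sym.
exists y, (x :: t); split => //=; first by rewrite st.
  by rewrite acyclic_path_fresh.
by rewrite e_sym exy.
Qed.

Lemma acyclic_leaf (W : {set 'I_n}) : W != set0 ->
  exists2 l, l \in W & forall u v, u \in W -> v \in W -> e l u -> e l v -> u = v.
Proof.
move=> W0.
case: (boolP [exists l in W, [forall u in W, forall v in W, e l u ==> e l v ==> (u == v)]]).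
  case/exists_inP=> l lW /forall_inP leaf; exists l => // u v uW vW elu elv.
  by apply/eqP; move/forall_inP: (leaf u uW) => /(_ v vW); rewrite elu elv.
move/exists_inPn => noleaf; exfalso.
have branching x : x \in W -> exists u v, [/\ u \in W, v \in W, e x u, e x v & u != v].
  move=> /noleaf /forall_inPn [u uW /forall_inPn [v vW]].
  by rewrite !negb_imply => /and3P [exu exv uNv]; exists u, v.
have [x [t [st uxt _ _]]] := acyclic_long_path branching W0 n.
by have := max_card (mem (x :: t)); rewrite card_ord (card_uniqP uxt) /= st ltnn.
Qed.

Section LocalLCP.
Variable R : realType.
Local Open Scope ring_scope.
Implicit Types (W : {set 'I_n}) (f : 'I_n -> R).

Definition closed_nbsum W f i := f i + \sum_(j in W | e i j) f j.

(* LCP(A + I, -e) on the subgraph induced by W; the slack at i is closed_nbsum W f i - 1. *)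
Definition lcp_on W f := forall i, i \in W ->
  [/\ 0 <= f i, 1 <= closed_nbsum W f i & (0 < f i -> closed_nbsum W f i = 1)].

Definition peelable W f p := forall q, q \in W -> e p q -> 0 < f q ->
  forall r, r \in W -> e q r -> r \in closed_nbhd W p.

Lemma closed_nbsum_leaf W f l p : p \in W -> e l p ->
  (forall u, u \in W -> e l u -> u = p) -> closed_nbsum W f l = f l + f p.
Proof.
move=> pW elp leaf; rewrite /closed_nbsum (eq_bigl (pred1 p)) ?big_pred1_eq //.
move=> j /=.
by apply/andP/eqP => [[jW elj] | ->]; [exact: leaf | split].
Qed.

Lemma closed_nbsum_bigD1 W f p l : l \in W -> e p l ->
  closed_nbsum W f p = f p + f l + \sum_(j | [&& j \in W, e p j & j != l]) f j.
Proof.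
move=> lW epl; rewrite /closed_nbsum (bigD1 l) ?lW //= addrA.
by under eq_bigl do rewrite -andbA.
Qed.

Lemma lcp_on_peelable W f :
  W != set0 -> lcp_on W f -> exists2 p, p \in W & peelable W f p.
Proof.
move=> W0 solf; have [l lW leaf] := acyclic_leaf W0.
have f_ge0 j : j \in W -> 0 <= f j by case/solf.
case: (pickP [pred u | (u \in W) && e l u]) => [p /andP [pW elp] | lNadj]; last first.
  by exists l => // q qW elq; move: (lNadj q); rewrite /= qW elq.
have leafp u : u \in W -> e l u -> u = p by move=> uW elu; apply: leaf.
have [_ sum_l_ge1 _] := solf l lW; have [_ _ sum_p_eq1] := solf p pW.
have [fp_gt0 | fp_le0] := ltrP 0 (f p); last first.
  by exists l => // q qW /(leafp q qW) ->; rewrite ltNge fp_le0.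
(* With f p > 0, the constraints at l and p force every other neighbour of p to weigh 0. *)
have epl : e p l by rewrite e_sym.
exists p => // q qW epq fq_gt0 r rW eqr.
have rest0 : \sum_(j | [&& j \in W, e p j & j != l]) f j = 0.
  apply/eqP; rewrite eq_le sumr_ge0 ?andbT => [|j /and3P [jW _ _]]; last exact: f_ge0.
  move: sum_l_ge1 (sum_p_eq1 fp_gt0).
  rewrite (closed_nbsum_leaf f pW elp leafp) (closed_nbsum_bigD1 f lW epl).
  lra.
have ql : q = l.
  apply/eqP; apply: contraTT fq_gt0 => qNl.
  by rewrite (psumr_eq0P _ rest0) ?ltxx ?qW ?epq // => j /and3P [jW _ _]; apply: f_ge0.
by move: eqr; rewrite ql => /(leafp r rW) ->; rewrite inE pW eqxx.
Qed.

Lemma closed_nbsum_peel W f p i : lcp_on W f -> peelable W f p ->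
  i \in W :\: closed_nbhd W p ->
  closed_nbsum (W :\: closed_nbhd W p) f i = closed_nbsum W f i.
Proof.
move=> solf peel /setDP [iW iNN]; rewrite /closed_nbsum; symmetry.
rewrite (big_setIDcond _ W (closed_nbhd W p)) /= big1 ?add0r //.
move=> j /andP [/setIP [jW jN] eij]; apply/eqP; rewrite eq_le andbC.
have [-> _ _] := solf j jW; rewrite leNgt /=; move: iNN; apply: contra => fj_gt0.
move: jN; rewrite inE jW => /orP [/eqP jp | epj].
  by rewrite inE iW -jp e_sym eij orbT.
by apply: (peel j jW epj fj_gt0 i iW); rewrite e_sym.
Qed.

Lemma lcp_on_peel W f p : lcp_on W f -> peelable W f p ->
  lcp_on (W :\: closed_nbhd W p) f.
Proof.
move=> solf peel i iW'; rewrite closed_nbsum_peel //.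
by apply: solf; case/setDP: iW'.
Qed.

Lemma sum_peel W f p : p \in W ->
  \sum_(i in W) f i = closed_nbsum W f p + \sum_(i in W :\: closed_nbhd W p) f i.
Proof.
move=> pW; rewrite (big_setID (closed_nbhd W p)) (big_setD1 p) ?inE ?pW ?eqxx //=.
congr (_ + _ + _); apply: eq_bigl => j; rewrite !inE.
by case: eqVneq => [-> | _]; rewrite ?e_irr ?andbF //=; case: (j \in W).
Qed.

Lemma lcp_on_dominating W f : lcp_on W f ->
  exists S : {set 'I_n}, [/\ S \subset W, independent e S,
    dominating W S & #|S|%:R <= \sum_(i in W) f i].
Proof.
have [k] := ubnP #|W|; elim: k W f => // k IH W f leWk solf.
have [-> | W0] := eqVneq W set0.
  exists set0; rewrite sub0set cards0 big_set0; split => // [|i]; last by rewrite inE.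
  by apply/forall_inP => i; rewrite inE.
have [p pW peel] := lcp_on_peelable W0 solf.
have ltW'W : (#|W :\: closed_nbhd W p| < #|W|)%N.
  apply/proper_card/properP; split; first exact: subsetDl.
  by exists p; rewrite // in_setD inE pW eqxx.
have [S [sSW' indS domS sumS]] := IH _ f (leq_trans ltW'W leWk) (lcp_on_peel solf peel).
have [sW indpS dompS] := independent_dominating_setU1 pW sSW' indS domS.
exists (p |: S); split => //.
have pNS : p \notin S by apply/negP => /(subsetP sSW') /setDP [_]; rewrite inE pW eqxx.
rewrite cardsU1 pNS natrD (sum_peel f pW); have [_ sum_p_ge1 _] := solf p pW.
exact: lerD.
Qed.

Lemma lcp_adj_entry (x : 'cV[R]_n) i :
  ((adjacency R e + 1%:M) *m x - ones R n) i 0 = closed_nbsum setT (fun j => x j 0) i - 1.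
Proof.
rewrite mulmxDl mul1mx !mxE /closed_nbsum [X in X - 1]addrC; congr (_ + _ - _).
rewrite [RHS]big_mkcond; apply: eq_bigr => j _; rewrite !mxE in_setT.
by case: (e i j); rewrite ?mul1r ?mul0r.
Qed.

Lemma dot_colE (x y : 'cV[R]_n) : (x^T *m y) 0 0 = \sum_i x i 0 * y i 0.
Proof. by rewrite mxE; apply: eq_bigr => i _; rewrite mxE. Qed.

Lemma ones_dotE (x : 'cV[R]_n) : ((ones R n)^T *m x) 0 0 = \sum_i x i 0.
Proof. by rewrite dot_colE; apply: eq_bigr => i _; rewrite mxE mul1r. Qed.

Lemma solves_LCP_lcp_on (x : 'cV[R]_n) :
  solves_LCP (adjacency R e + 1%:M) (- ones R n) x -> lcp_on setT (fun i => x i 0).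
Proof.
move=> [x_ge0 [y_ge0 xy0]] i _; rewrite dot_colE in xy0.
have compl : x i 0 * ((adjacency R e + 1%:M) *m x - ones R n) i 0 = 0.
  by apply: (psumr_eq0P _ xy0) => // j _; apply: mulr_ge0.
split=> //; first by have := y_ge0 i; rewrite lcp_adj_entry subr_ge0.
move=> xi_gt0; move/eqP: compl; rewrite mulf_eq0 gt_eqF //= lcp_adj_entry subr_eq0.
by move/eqP.
Qed.

Lemma indicator_solves_LCP (S : {set 'I_n}) : independent e S -> dominating setT S ->
  solves_LCP (adjacency R e + 1%:M) (- ones R n) (\col_i (i \in S)%:R).
Proof.
move=> indS domS; rewrite /solves_LCP; set x := \col_i _; set y := _ *m x + _.
have xE i : x i 0 = (i \in S)%:R by rewrite mxE.
have y_in i : i \in S -> y i 0 = 0.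
  move=> iS; rewrite /y lcp_adj_entry /closed_nbsum xE iS big1 ?addr0 ?subrr //.
  move=> j /andP [_ eij]; rewrite xE; case: (boolP (j \in S)) => // jS.
  by move/forall_inP: indS => /(_ i iS) /forall_inP /(_ j jS); rewrite eij.
have y_out i : i \notin S -> 0 <= y i 0.
  move=> iNS; have /exists_inP [j jS eij] : [exists j in S, e i j].
    by have := domS i (in_setT i); rewrite (negbTE iNS).
  rewrite /y lcp_adj_entry /closed_nbsum xE (negbTE iNS) add0r subr_ge0 (bigD1 j) ?in_setT //=.
  by rewrite xE jS lerDl sumr_ge0 // => k _; rewrite xE ler0n.
split; first by move=> i; rewrite xE ler0n.
split; first by move=> i; case: (boolP (i \in S)) => [/y_in -> | /y_out].
rewrite dot_colE big1 // => i _; case: (boolP (i \in S)) => [/y_in -> | iNS].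
  by rewrite mulr0.
by rewrite xE (negbTE iNS) mul0r.
Qed.

Lemma ones_dot_indicator (S : {set 'I_n}) :
  ((ones R n)^T *m \col_i (i \in S)%:R) 0 0 = #|S|%:R.
Proof.
rewrite ones_dotE -sumr_const [RHS]big_mkcond.
by apply: eq_bigr => i _; rewrite mxE; case: (i \in S).
Qed.

End LocalLCP.
End Graph.

Local Open Scope ring_scope.

Theorem theorem2 (R : realType) (n : nat) (e : rel 'I_n) :
  forest e ->
  let M := adjacency R e + 1%:M in
  let q := - ones R n in
  (exists2 x : 'cV[R]_n, solves_LCP M q x & ((ones R n)^T *m x) 0 0 = (beta e)%:R) /\
  (forall x : 'cV[R]_n, solves_LCP M q x -> (beta e)%:R <= ((ones R n)^T *m x) 0 0).
Proof.
move=> [[e_sym e_irr] e_acyclic] M q; split.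
  have [S maxS ->] := beta_attained e.
  exists (\col_i (i \in S)%:R); last exact: ones_dot_indicator.
  apply: indicator_solves_LCP; first by case/andP: maxS.
  exact: maximal_independent_dominating.
move=> x /solves_LCP_lcp_on solx.
have [S [_ indS domS sumS]] := lcp_on_dominating e_sym e_irr e_acyclic solx.
have maxS := independent_dominating_maximal indS domS.
have sum_setT : \sum_(i in [set: 'I_n]) x i 0 = \sum_i x i 0.
  by apply: eq_bigl => i; rewrite in_setT.
by rewrite ones_dotE -sum_setT (le_trans _ sumS) // ler_nat beta_le.
Qed.
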